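(* Assume the Standing Hypothesis (R). Then $G_v\cap L$ is not isomorphic to $\mathrm{C}_{q-\sqrt{3q}+1}:6$ nor to $\mathrm{C}_{q+\sqrt{3q}+1}:6$ (the maximal subgroups of $L$ that are semidirect products of a cyclic group of order $q\mp\sqrt{3q}+1$ by a cyclic group of order $6$).
   Context: Standing Hypothesis (R): $n\geq 1$, $q=3^{2n+1}$, $L={}^{2}\mathrm{G}_{2}(q)$ (the small Ree group), $G=L:m$ with $m$ a divisor of $2n+1$ (extension by field automorphisms, so $L\leq G\leq\mathrm{Aut}(L)=L:(2n+1)$). $\Gamma$ is a finite digraph with at least one arc, $G\leq\mathrm{Aut}(\Gamma)$ acts primitively on the vertices and transitively on the $s$-arcs of $\Gamma$ for some $s\geq 2$, and $v$ is a vertex with stabiliser $G_v$ (a maximal subgroup of $G$ not containing $L$). A digraph is a finite set with an anti-symmetric irreflexive relation $\to$; an $s$-arc is a sequence $v_0,\dots,v_s$ with $v_i\to v_{i+1}$. $\mathrm{C}_k$ is the cyclic group of order $k$. *)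

From HB Require Import structures.
From mathcomp Require Import all_boot all_order all_algebra all_fingroup all_solvable all_field.
Set Implicit Arguments. Unset Strict Implicit. Unset Printing Implicit Defensive.
Import GRing.Theory.

(* The small Ree group 2G2(q), q = 3^(2n+1), as a subgroup of GL_7(F_q).     *)
(* We use the 7-dimensional representation of the Chevalley group G2 with a  *)
(* Chevalley basis (basis v1..v7 of weights 2a+b, a+b, a, 0, -a, -a-b,      *)
(* -2a-b; a short simple root, b long simple root).  A root element is       *)
(*   x_r(t) = 1 + t e_r + t^2 (e_r^2/2)                                      *)
(* (e_r^3 = 0).  The Ree group is the subgroup generated by the elements     *)
(*   x_{+-S}(t) = x_{+-a}(t^th) x_{+-b}(t) x_{+-(a+b)}(-t^(th+1))            *)
(*                x_{+-(2a+b)}(t^(2th+1)),      th = 3^n,  t in F_q          *)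
(* (Carter, Simple groups of Lie type, 13.6), i.e. by the fixed points of    *)
(* the Steinberg endomorphism in the positive and negative unipotent         *)

Local Open Scope ring_scope.

(* a 7x7 matrix from a list of (row, column, integer entry) (0-indexed) *)
Definition mx_of_list (F : fieldType) (l : seq (nat * nat * int)) : 'M[F]_7 :=
  \matrix_(i < 7, j < 7)
     \sum_(e <- l | (e.1.1 == i :> nat) && (e.1.2 == j :> nat)) (e.2)%:~R.

(* root element x_r(t) given e_r and e_r^2/2 *)
Definition root_elt (F : fieldType) (e h : seq (nat * nat * int)) (t : F)
  : 'M[F]_7 :=
  1%:M + t *: mx_of_list F e + (t ^+ 2) *: mx_of_list F h.

(* e_r and e_r^2/2 for r = a, b, a+b, 2a+b (neg = false) and their negatives *)
Definition e_a (neg : bool) : seq (nat * nat * int) :=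
  if neg then [:: (1%N, 0%N, (1)%Z); (3%N, 2%N, (2)%Z); (4%N, 3%N, (1)%Z); (6%N, 5%N, (1)%Z)]
  else [:: (0%N, 1%N, (1)%Z); (2%N, 3%N, (1)%Z); (3%N, 4%N, (2)%Z); (5%N, 6%N, (1)%Z)].
Definition h_a (neg : bool) : seq (nat * nat * int) :=
  if neg then [:: (4%N, 2%N, (1)%Z)] else [:: (2%N, 4%N, (1)%Z)].
Definition e_b (neg : bool) : seq (nat * nat * int) :=
  if neg then [:: (2%N, 1%N, (1)%Z); (5%N, 4%N, (1)%Z)] else [:: (1%N, 2%N, (1)%Z); (4%N, 5%N, (1)%Z)].
Definition h_b (neg : bool) : seq (nat * nat * int) := [::].
Definition e_ab (neg : bool) : seq (nat * nat * int) :=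
  if neg then [:: (2%N, 0%N, (-1)%Z); (3%N, 1%N, (2)%Z); (5%N, 3%N, (-1)%Z); (6%N, 4%N, (1)%Z)]
  else [:: (0%N, 2%N, (1)%Z); (1%N, 3%N, (-1)%Z); (3%N, 5%N, (2)%Z); (4%N, 6%N, (-1)%Z)].
Definition h_ab (neg : bool) : seq (nat * nat * int) :=
  if neg then [:: (5%N, 1%N, (-1)%Z)] else [:: (1%N, 5%N, (-1)%Z)].
Definition e_2ab (neg : bool) : seq (nat * nat * int) :=
  if neg then [:: (3%N, 0%N, (-2)%Z); (4%N, 1%N, (1)%Z); (5%N, 2%N, (1)%Z); (6%N, 3%N, (-1)%Z)]
  else [:: (0%N, 3%N, (-1)%Z); (1%N, 4%N, (1)%Z); (2%N, 5%N, (1)%Z); (3%N, 6%N, (-2)%Z)].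
Definition h_2ab (neg : bool) : seq (nat * nat * int) :=
  if neg then [:: (6%N, 0%N, (1)%Z)] else [:: (0%N, 6%N, (1)%Z)].

Definition ree_x (F : fieldType) (n : nat) (neg : bool) (t : F) : 'M[F]_7 :=
  let th := (3 ^ n)%N in
  root_elt (e_a neg) (h_a neg) (t ^+ th) *m
  root_elt (e_b neg) (h_b neg) t *m
  root_elt (e_ab neg) (h_ab neg) (- t ^+ th.+1) *m
  root_elt (e_2ab neg) (h_2ab neg) (t ^+ (th.*2).+1).

Definition ree_gens (F : finFieldType) (n : nat) : {set 'M[F]_7} :=
  [set ree_x n b t | b : bool, t : F].

(* The Ree group 2G2(3^(2n+1)), for F a field of order 3^(2n+1). *)
Definition Ree (F : finFieldType) (n : nat) : {group {'GL_7[F]}} :=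
  <<[set g : {'GL_7[F]} | GLval g \in ree_gens F n]>>%G.

Definition is_digraph (V : finType) (arc : rel V) : Prop :=
  (forall x, ~~ arc x x) /\ (forall x y, arc x y -> ~~ arc y x).

Definition sarc (V : finType) (arc : rel V) (s : nat) (p : seq V) : bool :=
  if p is x :: p' then (size p' == s) && path arc x p' else false.

Definition preserves_arcs (V : finType) (arc : rel V) (G : {set {perm V}}) :=
  forall g, g \in G -> forall x y, arc (g x) (g y) = arc x y.

Definition sarc_transitive (V : finType) (arc : rel V) (G : {set {perm V}})
  (s : nat) :=
  forall p1 p2, sarc arc s p1 -> sarc arc s p2 ->
    exists2 g, g \in G & map (fun x => g x) p1 = p2.

Definition cyclic_by_C6 (gT : finGroupType) (M : {set gT}) (k : nat) : Prop :=
  exists K H : {group gT},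
    [/\ (K ><| H)%g = M, cyclic K, #|K| = k, cyclic H & #|H| = 6%N].

From HB Require Import structures.
From mathcomp Require Import all_boot all_order all_algebra all_fingroup all_solvable all_field.
From mathcomp Require Import zify.
Set Implicit Arguments. Unset Strict Implicit. Unset Printing Implicit Defensive.

(*   Suppose it is, and write G_x for vertex stabilisers.  The pi(k)-core K_x *)
(* of G_x :&: L is a cyclic normal Hall subgroup of G_x of order k.  For an *)
(* arc x -> y, K_x :&: G_y = K_x :&: K_y is characteristic in K_x and is    *)
(* normalised by an element outside the maximal subgroup G_x, hence normal  *)
(* in G and thus trivial.  By 2-arc transitivity the arc stabiliser G_xy    *)
(* has an orbit of length divisible by k, so k^2 divides |G_x| = 6k |G_x :  *)
(* G_x :&: L|; as k is prime to 6, k divides |G : L|, which divides 2n + 1. *)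
(* But k > 2n + 1.  The file proves the arithmetic facts on k, then general *)

(* 3 b (b + 1) + 1 is congruent to 1 mod 6.  Both orders k have this form:  *)
(* with a = 3^n, q = 3 a^2 and r = 3 a, so q -+ r + 1 = 3 a (a -+ 1) + 1.    *)
Lemma coprime6_pronic (b : nat) : coprime (3 * (b * b.+1) + 1) 6.
Proof.
have even_pronic : 2 %| b * b.+1 by rewrite dvdn2 oddM /= andbN.
have six_dvd : 6 %| 3 * (b * b.+1) by rewrite -[6]/(3 * 2) dvdn_pmul2l.
by rewrite -coprime_modl -modnDml (eqP six_dvd).
Qed.

Lemma coprime6_gt0 (k : nat) : coprime k 6 -> 0 < k.
Proof. by case: k => //; rewrite /coprime gcd0n. Qed.

Lemma ree_torus_order (n k : nat) : 1 <= n ->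
  k = 3 ^ (2 * n + 1) - 3 ^ n.+1 + 1 \/ k = 3 ^ (2 * n + 1) + 3 ^ n.+1 + 1 ->
  coprime k 6 /\ 2 * n + 1 < k.
Proof.
move=> n_ge1 def_k; set a := 3 ^ n in def_k.
have a_gt_n : n < a by apply: ltn_expl.
have def_r : 3 ^ n.+1 = 3 * a by rewrite expnS.
have def_q : 3 ^ (2 * n + 1) = 3 * (a * a) by rewrite addn1 expnS mul2n -addnn expnD.
rewrite def_r def_q in def_k.
case: def_k => ->.
- have -> : 3 * (a * a) - 3 * a + 1 = 3 * (a.-1 * a.-1.+1) + 1.
    by rewrite prednK; [nia | lia].
  by rewrite coprime6_pronic; split=> //; rewrite prednK; nia.
- have -> : 3 * (a * a) + 3 * a + 1 = 3 * (a * a.+1) + 1 by nia.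
  by rewrite coprime6_pronic; split=> //; nia.
Qed.

Local Open Scope group_scope.

Lemma card_cyclic_by_C6 (gT : finGroupType) (M : {group gT}) (k : nat) :
  cyclic_by_C6 M k -> #|M| = (k * 6)%N.
Proof. by case=> K [H [defM _ oK _ oH]]; rewrite -(sdprod_card defM) oK oH. Qed.

(* In a group Y isomorphic to C_k : C_6 with k prime to 6, the pi(k)-core   *)
(* is a cyclic Hall subgroup of order k: it is the image of the kernel C_k. *)
Lemma cyclic_by_C6_pcore (gT rT : finGroupType) (Y : {group gT})
    (M : {group rT}) (k : nat) :
  coprime k 6 -> cyclic_by_C6 M k -> Y \isog M ->
  [/\ cyclic 'O_\pi(k)(Y), #|'O_\pi(k)(Y)| = k & \pi(k).-Hall(Y) 'O_\pi(k)(Y)].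
Proof.
move=> k_coprime6 cycM isoYM; have oM := card_cyclic_by_C6 cycM.
have k_gt0 := coprime6_gt0 k_coprime6.
case: cycM => K [H [defM cycK oK _ oH]].
have [nKM _ _ _ _] := sdprod_context defM.
have hallK : \pi(k).-Hall(M) K.
  rewrite /pHall (normal_sub nKM) /pgroup oK pnat_pi //=.
  by rewrite -(index_sdprod defM) oH -coprime_pi'.
have isoO := isog_pcore \pi(k) isoYM.
rewrite (normal_Hall_pcore hallK nKM) in isoO.
have oO : #|'O_\pi(k)(Y)| = k by rewrite (card_isog isoO).
split=> //; first by rewrite (isog_cyclic isoO).
rewrite /pHall pcore_sub pcore_pgroup /= -divgS ?pcore_sub //.
by rewrite (card_isog isoYM) oM oO mulKn // -coprime_pi'.
Qed.

Lemma TI_norm_card_dvd (gT : finGroupType) (A K H : {group gT}) :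
  K \subset A -> H \subset A -> H \subset 'N(K) -> K :&: H = 1 ->
  (#|K| * #|H| %| #|A|)%N.
Proof.
move=> sKA sHA nKH tiKH.
by rewrite -(TI_cardMg tiKH) -(norm_joinEr nKH) cardSg // join_subG sKA.
Qed.

Lemma indexgI_dvd_index (gT : finGroupType) (G H L : {group gT}) :
  H \subset G -> L <| G -> (#|H : H :&: L| %| #|G : L|)%N.
Proof.
move=> sHG /normal_norm nLG.
rewrite indexgI -!card_quotient ?(subset_trans sHG) //.
by rewrite cardSg // quotientS.
Qed.

Section ArcTransitivity.

Variables (V : finType) (arc : rel V) (G : {group {perm V}}) (s : nat).
Hypotheses (trG : [transitive G, on [set: V] | 'P])
  (presG : preserves_arcs arc G) (has_arc : exists x y, arc x y).

Lemma vertex_in_orbit (v y : V) : exists2 a, a \in G & y = a v.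
Proof.
have : y \in orbit 'P G v by rewrite (atransP trG) ?inE.
by case/imsetP=> a Ga ->; exists a.
Qed.

Lemma out_neighbour (z : V) : exists y, arc z y.
Proof.
have [x [y arc_xy]] := has_arc; have [a Ga ->] := vertex_in_orbit x z.
by exists (a y); rewrite /= presG.
Qed.

Lemma path_from (j : nat) (x : V) : exists p, path arc x p && (size p == j).
Proof.
elim: j x => [|j IHj] x; first by exists [::].
have [y arc_xy] := out_neighbour x; have [p /andP[path_p size_p]] := IHj y.
by exists (y :: p); rewrite /= arc_xy path_p.
Qed.

Hypotheses (s_ge2 : (2 <= s)%N) (str : sarc_transitive arc G s).

(* G is transitive on 2-arcs: extend both 2-arcs to s-arcs. *)
Lemma two_arc_transitive (a b c a' b' c' : V) :
  arc a b -> arc b c -> arc a' b' -> arc b' c' ->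
  exists2 g, g \in G & [/\ g a = a', g b = b' & g c = c'].
Proof.
move=> ab bc ab' bc'.
have [p /andP[path_p /eqP size_p]] := path_from (s - 2) c.
have [p' /andP[path_p' /eqP size_p']] := path_from (s - 2) c'.
have [|| g Gg [ga gb gc _]] := @str (a :: b :: c :: p) (a' :: b' :: c' :: p').
- by rewrite /sarc /= ab bc path_p size_p andbT; apply/eqP; lia.
- by rewrite /sarc /= ab' bc' path_p' size_p' andbT; apply/eqP; lia.
by exists g.
Qed.

Lemma arc_transitive (a b a' b' : V) :
  arc a b -> arc a' b' -> exists2 g, g \in G & g a = a' /\ g b = b'.
Proof.
move=> ab ab'; have [c bc] := out_neighbour b; have [c' bc'] := out_neighbour b'.
by have [g Gg [ga gb _]] := two_arc_transitive ab bc ab' bc'; exists g.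
Qed.

End ArcTransitivity.

Section CyclicByC6Stabiliser.

Variables (V : finType) (arc : rel V) (s : nat) (G L : {group {perm V}}).
Variables (rT : finGroupType) (M : {group rT}) (k : nat) (v : V).
Hypotheses (nLG : L <| G) (k_coprime6 : coprime k 6) (cycM : cyclic_by_C6 M k).
Hypotheses (arc_irr : forall x, ~~ arc x x) (has_arc : exists x y, arc x y).
Hypotheses (presG : preserves_arcs arc G)
  (trG : [transitive G, on [set: V] | 'P]).
Hypotheses (s_ge2 : (2 <= s)%N) (str : sarc_transitive arc G s).
Hypotheses (maxSv : maximal 'C_G[v | 'P] G) (isoYv : 'C_G[v | 'P] :&: L \isog M).

Local Notation S x := ('C_G[x | 'P])%G.
Local Notation Y x := (S x :&: L)%G.
Local Notation K x := ('O_\pi(k)(Y x))%G.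

Lemma stabJ (a : {perm V}) (x : V) : a \in G -> S (a x) :=: S x :^ a.
Proof. by move=> Ga; rewrite conjIg conjGid // -astab1_act. Qed.

Lemma YJ (a : {perm V}) (x : V) : a \in G -> Y (a x) = (Y x :^ a)%G.
Proof.
move=> Ga; apply: val_inj => /=.
by rewrite conjIg -stabJ // (normsP (normal_norm nLG)).
Qed.

Lemma KJ (a : {perm V}) (x : V) : a \in G -> K (a x) :=: K x :^ a.
Proof. by move=> Ga; rewrite YJ //; apply: pcoreJ. Qed.

(* All vertex stabilisers are conjugate to G_v. *)
Lemma maximal_stab (x : V) : maximal (S x) G.
Proof.
have [a Ga ->] := vertex_in_orbit trG v x.
by rewrite stabJ // -{1}(conjGid Ga) maximalJ.
Qed.

Lemma Y_isog (x : V) : Y x \isog M.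
Proof.
have [a Ga ->] := vertex_in_orbit trG v x.
by rewrite YJ // (isog_transl _ (isog_symr (conj_isog _ a))).
Qed.

Lemma K_facts (x : V) :
  [/\ cyclic (K x), #|K x| = k & \pi(k).-Hall(Y x) (K x)].
Proof. exact: cyclic_by_C6_pcore k_coprime6 cycM (Y_isog x). Qed.

(* K_x is characteristic in Y_x, which is normal in G_x. *)
Lemma K_normal (x : V) : K x <| S x.
Proof. exact: char_normal_trans (pcore_char _ _) (normalGI (subsetIl _ _) nLG). Qed.

Lemma K_sub_stab (x : V) : K x \subset S x.
Proof. exact: normal_sub (K_normal x). Qed.

(* K_x :&: G_y is a pi(k)-subgroup of Y_y, hence lies in its normal Hall  *)
(* subgroup K_y.                                                            *)
Lemma K_meet_stabE (x y : V) : K x :&: S y = K x :&: K y.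
Proof.
apply/eqP; rewrite eqEsubset andbC setIS ?K_sub_stab //= subsetI subsetIl /=.
have [_ _ hallKy] := K_facts y.
rewrite (sub_normal_Hall hallKy (pcore_normal _ _)) ?(pgroupS (subsetIl _ _))
  ?pcore_pgroup //= subsetI subsetIr (subset_trans (subsetIl _ _)) //.
exact: subset_trans (pcore_sub _ _) (subsetIr _ _).
Qed.

(* Along an arc x -> y, K_x :&: K_y is normal in G: it is characteristic   *)
(* in the cyclic K_x, hence normalised by G_x, and it is also normalised by *)
(* an element mapping the arc x -> y to an arc y -> z, which lies outside   *)
(* the maximal subgroup G_x.                                                *)
Lemma K_meet_normal (x y : V) : arc x y -> G \subset 'N(K x :&: K y).
Proof.
move=> arc_xy; set E := K x :&: K y.
have [cycKx _ _] := K_facts x; have [cycKy _ _] := K_facts y.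
have nESx : S x \subset 'N(E).
  have charE : E \char K x by rewrite sub_cyclic_char ?subsetIl.
  exact: char_norm_trans charE (normal_norm (K_normal x)).
have [z arc_yz] := out_neighbour trG presG has_arc y.
have [g Gg [gx gy]] := arc_transitive trG presG has_arc s_ge2 str arc_xy arc_yz.
have nEg : g \in 'N(E).
  apply/normP/eqP; rewrite (eq_subG_cyclic cycKy) ?cardJg ?subsetIr //.
  by rewrite /= conjIg -!KJ // gx subsetIl.
have gSx : g \notin S x.
  by apply/negP=> /setIP[_ /astab1P]; rewrite /= /aperm gx => eq_yx;
    move: arc_xy; rewrite eq_yx (negbTE (arc_irr x)).
have [_ maxSx] := maxgroupP (maximal_stab x).
have [<-|properN] := eqVproper (subsetIl G 'N(E)); first exact: subsetIr.
have sSxN : S x \subset 'N_G(E) by rewrite subsetI subsetIl.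
by move: gSx; rewrite -(maxSx _ properN sSxN) inE Gg nEg.
Qed.

Lemma normal_stab_trivial (E : {group {perm V}}) (x : V) :
  E \subset S x -> G \subset 'N(E) -> E :=: 1.
Proof.
move=> sESx nEG; apply/trivgP/subsetP=> e Ee; rewrite inE; apply/eqP/permP=> y.
have [a Ga ->] := vertex_in_orbit trG x y.
have sESax : E \subset S (a x) by rewrite stabJ // -(normsP nEG a Ga) conjSg.
by case/setIP: (subsetP sESax e Ee) => _ /astab1P; rewrite perm1.
Qed.

Lemma K_meet_stab (x y : V) : arc x y -> K x :&: S y = 1.
Proof.
move=> arc_xy; rewrite K_meet_stabE.
apply: (normal_stab_trivial (x := x)); last exact: K_meet_normal.
exact: subset_trans (subsetIl _ _) (K_sub_stab x).
Qed.

Lemma two_point_stab_sub (y z : V) : 'C_(S y)[z | 'P] \subset S z.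
Proof. exact/setSI/subsetIl. Qed.

(* Along an arc x -> y, the arc stabiliser G_xy normalises K_x and meets  *)
(* it trivially, so K_x G_xy has order k |G_xy| inside G_x.                 *)
Lemma k_mul_arc_stab_dvd (x y : V) :
  arc x y -> (k * #|'C_(S x)[y | 'P]| %| #|S x|)%N.
Proof.
move=> arc_xy; have [_ oKx _] := K_facts x.
have tiKT : K x :&: 'C_(S x)[y | 'P] = 1.
  by apply/trivgP; rewrite -(K_meet_stab arc_xy) setIS ?two_point_stab_sub.
have nKT := subset_trans (subsetIl _ 'C[y | 'P]) (normal_norm (K_normal x)).
by rewrite -oKx TI_norm_card_dvd ?K_sub_stab ?subsetIl.
Qed.

Lemma k_dvd_orbit (x y : V) : arc x y -> (k %| #|orbit 'P (S x) y|)%N.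
Proof.
move=> arc_xy; have := k_mul_arc_stab_dvd arc_xy.
rewrite card_orbit -(Lagrange (subsetIl (S x) 'C[y | 'P])) mulnC.
by rewrite dvdn_pmul2l ?cardG_gt0.
Qed.

(* By 2-arc transitivity the arc stabiliser G_xy has the same orbit on the *)
(* out-neighbours of y as G_y.                                              *)
Lemma arc_stab_orbit (x y z : V) : arc x y -> arc y z ->
  orbit 'P ('C_(S x)[y | 'P]) z = orbit 'P (S y) z.
Proof.
move=> arc_xy arc_yz; apply/eqP; rewrite eqEsubset imsetS ?two_point_stab_sub //=.
apply/subsetP=> _ /imsetP[h /setIP[Gh /astab1P hy] ->].
have arc_yhz : arc y (h z) by rewrite -{1}hy /= /aperm presG.
have [g Gg [gx gy gz]] := two_arc_transitive trG presG has_arc s_ge2 str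
  arc_xy arc_yz arc_xy arc_yhz.
apply/imsetP; exists g; last by rewrite /= /aperm gz.
by rewrite !inE Gg !sub1set !inE; apply/andP; split; apply/eqP.
Qed.

(* k^2 divides |G_x|: one factor k from K_x, the other from the orbit of *)
(* the arc stabiliser G_xy on the out-neighbours of y.                      *)
Lemma k2_dvd_stab (x : V) : (k * k %| #|S x|)%N.
Proof.
have [y arc_xy] := out_neighbour trG presG has_arc x.
have [z arc_yz] := out_neighbour trG presG has_arc y.
apply: dvdn_trans (k_mul_arc_stab_dvd arc_xy).
rewrite dvdn_pmul2l ?coprime6_gt0 //.
rewrite -(Lagrange (subsetIl 'C_(S x)[y | 'P] 'C[z | 'P])) dvdn_mull //.
by rewrite -card_orbit arc_stab_orbit // k_dvd_orbit.
Qed.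

Lemma cyclic_by_C6_order_dvd_index : (k %| #|G : L|)%N.
Proof.
have oYv : #|Y v| = (k * 6)%N by rewrite (card_isog isoYv) (card_cyclic_by_C6 cycM).
have := k2_dvd_stab v; rewrite -(Lagrange (subsetIl (S v) L)) oYv -mulnA.
rewrite dvdn_pmul2l ?coprime6_gt0 // Gauss_dvdr // => k_dvd_index.
exact: dvdn_trans k_dvd_index (indexgI_dvd_index (subsetIl _ _) nLG).
Qed.

End CyclicByC6Stabiliser.

Local Close Scope group_scope.

Theorem lemma3p4
  (n : nat) (F : finFieldType) (V : finType) (arc : rel V) (s : nat)
  (G L : {group {perm V}}) (v : V) :
  (1 <= n)%N ->
  #|F| = (3 ^ (2 * n + 1))%N ->
  (* L = 2G2(q), G = L:m <= Aut(L) with m | 2n+1 *)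
  (L <| G)%g ->
  L \isog Ree F n ->
  ('C_G(L) = 1)%g ->
  (#|G : L|%g %| 2 * n + 1)%N ->
  (* Gamma is a digraph with at least one arc, G <= Aut(Gamma) *)
  is_digraph arc ->
  (exists x y, arc x y) ->
  preserves_arcs arc G ->
  (* G primitive on vertices and transitive on s-arcs, s >= 2 *)
  [primitive G, on [set: V] | 'P] ->
  (2 <= s)%N ->
  sarc_transitive arc G s ->
  (* G_v is a maximal subgroup of G not containing L *)
  maximal 'C_G[v | 'P]%g G ->
  ~~ (L \subset 'C_G[v | 'P])%g ->
  let q := (3 ^ (2 * n + 1))%N in
  let r := (3 ^ n.+1)%N in (* r = sqrt(3q) *)
  ~ (exists M : {group {perm V}},
       [/\ maximal M L, cyclic_by_C6 M (q - r + 1) & (('C_G[v | 'P] :&: L)%g \isog M)])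
  /\
  ~ (exists M : {group {perm V}},
       [/\ maximal M L, cyclic_by_C6 M (q + r + 1) & (('C_G[v | 'P] :&: L)%g \isog M)]).
Proof.
move=> n_ge1 _ nLG _ _ index_dvd [arc_irr _] has_arc presG primG s_ge2 str maxSv _ q r.
have trG : [transitive G, on [set: V] | 'P] by case/andP: primG.
suff no_stab k : coprime k 6 /\ (2 * n + 1 < k)%N ->
    ~ exists M : {group {perm V}},
      [/\ maximal M L, cyclic_by_C6 M k & ('C_G[v | 'P] :&: L)%g \isog M].
  by split; apply: no_stab; apply: (ree_torus_order n_ge1); [left | right].
move=> [k_coprime6 k_big] [M [_ cycM isoYv]].
have k_dvd_index := cyclic_by_C6_order_dvd_index nLG k_coprime6 cycM arc_irr
  has_arc presG trG s_ge2 str maxSv isoYv.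
have := dvdn_leq _ (dvdn_trans k_dvd_index index_dvd); rewrite addn1 => /(_ isT).
lia.
Qed.
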